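(* Let $d\geq 3$ and let $n$ be an integer with $n\not\equiv -1\pmod d$. (a) If $0\neq W\subset A^n$ is an additive subgroup stable under $\Gamma_n(d)$, then $W\supseteq\lambda A^n$ for some non-zero $\lambda\in A$; in particular $W$ has finite index in $A^n$. (b) If $F\supseteq A$ is a field and $W_F\subseteq F^n$ is a non-zero $F$-subspace stable under $\rho_n(d)(B_{n+1})$, then $W_F=F^n$.
   Context: $A=\mathbb{Z}[q,q^{-1}]/(\Phi_d(q))$, where $\Phi_d$ is the $d$-th cyclotomic polynomial. $\rho_n(d):B_{n+1}\to GL_n(A)$ is the reduced Burau representation reduced mod $\Phi_d(q)$. It sends the generator $s_j$ to $T_j$, where $T_j(e_j)=-qe_j$, $T_j(e_{j-1})=e_{j-1}+qe_j$, $T_j(e_{j+1})=e_{j+1}+e_j$, and $T_j(e_k)=e_k$ for $|k-j|\geq 2$, with $e_1,\dots,e_n$ the standard basis. $\Gamma_n(d)$ denotes the image of $\rho_n(d)$. *)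

From HB Require Import structures.
From mathcomp Require Import all_boot all_order all_algebra all_field.
Set Implicit Arguments. Unset Strict Implicit. Unset Printing Implicit Defensive.
Import GRing.Theory.
Local Open Scope ring_scope.

(* A = Z[q,q^-1]/(Phi_d(q)), realised as Z[q]/(Phi_d(q)) (q is already a unit
   there since Phi_d(0) = +-1), using mathcomp's quotient ring {poly %/ h}. *)
Definition Aring (d : nat) := {poly %/ ('Phi_d : {poly int})}.

Definition qA (d : nat) : Aring d := 'qX.

(* Matrix of T_j (generic ring R, parameter q), acting on column vectors:
   column k is T_j(e_k).  Indices 1..n of the paper are 0..n-1 here. *)
Definition burauT (R : pzRingType) (n : nat) (q : R) (j : 'I_n) : 'M[R]_n :=
  \matrix_(i < n, k < n)
    if i == k then (if k == j then - q else 1)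
    else if i == j then
      (if (k.+1 == j :> nat) then q else if (k == j.+1 :> nat) then 1 else 0)
    else 0.

Definition rhoT (d n : nat) (j : 'I_n) : 'M[Aring d]_n := burauT (qA d) j.

Inductive Gamma (d n : nat) : 'M[Aring d]_n -> Prop :=
  | Gamma1 : Gamma 1%:M
  | GammaT (j : 'I_n) (g : 'M[Aring d]_n) :
      Gamma g -> Gamma (rhoT d j *m g)
  | GammaTinv (j : 'I_n) (M g : 'M[Aring d]_n) :
      M *m rhoT d j = 1%:M -> Gamma g -> Gamma (M *m g).

From HB Require Import structures.
From mathcomp Require Import all_boot all_order all_algebra all_field.
From Stdlib Require Import Lia.
From mathcomp Require Import zify ring.
Set Implicit Arguments. Unset Strict Implicit. Unset Printing Implicit Defensive.
Import GRing.Theory Num.Theory.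
Local Open Scope ring_scope.

(* Let T_j = burauT q j over a commutative ring R and let e_k be the standard
   basis of column vectors.  Three facts hold over any such R:
   - (T_j - 1) v is a multiple of e_j, with coefficient
     phi_j(v) = (-q-1) v_j + q v_(j-1) + v_(j+1);
   - if all phi_j(v) vanish then v_m = v_0 (1 + q + ... + q^m) for m <= n and
     v_n = 0, so v = 0 as soon as 1 + q + ... + q^n is a regular element;
   - from c e_j, the maps T_i - 1 reach c q^k e_k for every k.
   Hence every nonzero set stable under the T_j - 1 contains the vectors
   c q^k e_k for some c != 0 (stable_set_contains_axes).
   For A = Z[q]/(Phi_d) we evaluate q at a primitive d-th root of unity: this
   embeds A into the complex algebraic numbers, so A is a domain in which
   1 + q + ... + q^n != 0 (as d does not divide n+1) and every nonzero element
   divides a nonzero integer N.  Part (a) follows because {a | a e_k \in W} is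
   an ideal of A and A^n / N A^n is finite; part (b) follows by rescaling the
   vectors c q^k e_k in a field. *)

Section BurauMatrices.
Variables (R : comNzRingType) (n : nat) (q : R).
Local Notation T := (@burauT R n q).
Local Notation e k := (delta_mx k 0 : 'cV[R]_n).

Lemma burauT_subI_col (j : 'I_n) (v : 'cV[R]_n) :
  (T j - 1) *m v = ((T j - 1) *m v) j 0 *: e j.
Proof.
apply/matrixP => i l; rewrite (ord1 l) !mxE.
have [->|nij] := eqVneq i j; first by rewrite eqxx mulr1.
rewrite mulr0 big1 // => k _; rewrite !mxE (negbTE nij).
by have [<-|nik] := eqVneq i k; rewrite ?(negbTE nij) subrr mul0r.
Qed.

Lemma burauT_subI_delta (j k : 'I_n) :
  (T j - 1) *m e k = (T j j k - (j == k)%:R) *: e j.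
Proof. by rewrite burauT_subI_col -colE !mxE. Qed.

Lemma burauT_delta_self (j : 'I_n) : T j *m e j = - q *: e j.
Proof.
apply/matrixP => i l; rewrite (ord1 l) -colE !mxE eqxx.
by have [_|nij] := eqVneq i j; rewrite ?mulr1 ?mulr0.
Qed.

Lemma burauT_superdiag (j k : 'I_n) : (k : nat) = j.+1 -> T j j k = 1.
Proof.
move=> Ek; rewrite !mxE eqxx.
have -> : (j == k) = false by apply/negbTE; rewrite -val_eqE /= Ek; lia.
by rewrite Ek eqxx; case: eqP => //; lia.
Qed.

Lemma burauT_subdiag (j k : 'I_n) : (j : nat) = k.+1 -> T j j k = q.
Proof.
move=> Ej; rewrite !mxE eqxx.
have -> : (j == k) = false by apply/negbTE; rewrite -val_eqE /= Ej; lia.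
by rewrite Ej eqxx.
Qed.

(* The m-th coordinate of v, extended by 0 to all indices m >= n. *)
Definition coord_nat (v : 'cV[R]_n) (m : nat) : R :=
  \sum_(k < n) (if (k : nat) == m then v k 0 else 0).

Lemma coord_natE (v : 'cV[R]_n) (j : 'I_n) : coord_nat v j = v j 0.
Proof.
rewrite /coord_nat (bigD1 j) //= eqxx big1 ?addr0 // => k nkj.
by case: eqP => // /val_inj Ekj; rewrite Ekj eqxx in nkj.
Qed.

Lemma coord_nat_out (v : 'cV[R]_n) (m : nat) : (n <= m)%N -> coord_nat v m = 0.
Proof.
move=> nm; rewrite /coord_nat big1 // => k _; case: eqP => // Ek.
by move: (ltn_ord k); rewrite Ek ltnNge nm.
Qed.

Lemma sum_if_mull (m : nat) (c : R) (g : 'I_n -> R) :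
  \sum_(k < n) (if (k : nat) == m then c * g k else 0) =
  c * \sum_(k < n) (if (k : nat) == m then g k else 0).
Proof. by rewrite mulr_sumr; apply: eq_bigr => k _; case: ifP; rewrite ?mulr0. Qed.

Lemma burauT_subI_coord (v : 'cV[R]_n) (j : 'I_n) :
  ((T j - 1) *m v) j 0 = (- q - 1) * coord_nat v j
    + (if (j : nat) is j'.+1 then q * coord_nat v j' else 0) + coord_nat v j.+1.
Proof.
rewrite !mxE.
have entry k : (T j - 1) j k * v k 0 =
    (if (k : nat) == j then (- q - 1) * v k 0 else 0)
  + (if (k.+1 == j)%N then q * v k 0 else 0)
  + (if (k : nat) == j.+1 then v k 0 else 0).
  rewrite !mxE eqxx; have [<-|njk] := eqVneq j k.
    by rewrite eqxx (gtn_eqF (ltnSn _)) (ltn_eqF (ltnSn _)) !addr0.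
  rewrite (_ : (k : nat) == j = false); last by rewrite eq_sym; exact/negbTE.
  rewrite subr0 add0r.
  case: ifP => E1; case: ifP => E2 //; first by move/eqP: E1 E2 => <- /eqP; lia.
  - by rewrite addr0.
  - by rewrite mul1r add0r.
  - by rewrite mul0r addr0.
under eq_bigr => k _ do rewrite entry.
rewrite !big_split /= sum_if_mull; congr (_ + _ + _).
case: (nat_of_ord j) => [|j']; first by rewrite big1.
rewrite -sum_if_mull; apply: eq_bigr => k _; by rewrite eqSS.
Qed.

Lemma coord_nat_geometric (v : 'cV[R]_n) :
  (forall j : 'I_n, ((T j - 1) *m v) j 0 = 0) ->
  forall m, (m <= n)%N -> coord_nat v m = coord_nat v 0 * \sum_(i < m.+1) q ^+ i.
Proof.
move=> phi0; set u := coord_nat v.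
have rec m : (m < n)%N ->
    (- q - 1) * u m + q * (if m is m'.+1 then u m' else 0) + u m.+1 = 0.
  move=> lt_mn; have := phi0 (Ordinal lt_mn); rewrite burauT_subI_coord /=.
  by case: m lt_mn => [|m] ? //=; rewrite mulr0.
have step m : (m <= n)%N ->
    u m - (if m is m'.+1 then u m' else 0) = q ^+ m * u 0%N.
  elim: m => [|m IH] le_mn; first by rewrite subr0 expr0 mul1r.
  rewrite exprS -mulrA -IH ?(ltnW le_mn) //; apply/eqP; rewrite -subr_eq0.
  apply/eqP; rewrite -[RHS](rec m le_mn).
  by move: (if m is m'.+1 then u m' else 0) (u m) (u m.+1) => c a b /=; ring.
elim=> [|m IH] le_mn; first by rewrite big_ord1 expr0 mulr1.
rewrite big_ord_recr /= mulrDr -IH ?(ltnW le_mn) // (mulrC (u 0%N)).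
rewrite -(step m.+1 le_mn) /=.
by move: (u m.+1) (u m) => a b; ring.
Qed.

Lemma burau_fixed_eq0 (v : 'cV[R]_n) :
  GRing.lreg (\sum_(i < n.+1) q ^+ i) ->
  (forall j : 'I_n, ((T j - 1) *m v) j 0 = 0) -> v = 0.
Proof.
move=> S_reg phi0; have geo := coord_nat_geometric phi0.
have u0 : coord_nat v 0 = 0.
  apply: S_reg; rewrite mulr0 mulrC -geo //.
  by rewrite coord_nat_out.
apply/matrixP => i l; rewrite (ord1 l) mxE -coord_natE geo 1?ltnW //.
by rewrite u0 mul0r.
Qed.

Lemma burau_moved_coord (v : 'cV[R]_n) :
  GRing.lreg (\sum_(i < n.+1) q ^+ i) -> v != 0 ->
  exists j : 'I_n, ((T j - 1) *m v) j 0 != 0.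
Proof.
move=> S_reg v0.
have [j|no_j] := pickP (fun j => ((T j - 1) *m v) j 0 != 0); first by exists j.
case/eqP: v0; apply: burau_fixed_eq0 => // j.
by apply/eqP; move/negbFE: (no_j j).
Qed.

End BurauMatrices.

(* Applying T_i - 1 along a path from j to k carries c e_j to c q^k e_k,
   up to the scalar c: going down multiplies by the superdiagonal entry 1,
   going up by the subdiagonal entry q. *)
Lemma burau_spread (R : comNzRingType) (n : nat) (q : R)
    (P : 'cV[R]_n.+1 -> Prop) :
  (forall (j : 'I_n.+1) v, P v -> P ((burauT q j - 1) *m v)) ->
  forall (c : R) (j : 'I_n.+1), P (c *: delta_mx j 0) ->
  forall k : 'I_n.+1, P ((c * q ^+ k) *: delta_mx k 0).
Proof.
move=> stableP c j Pj.
have down m : (m <= j)%N -> P (c *: delta_mx (inord (j - m)) 0).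
  elim: m => [|m IH] le_mj; first by rewrite subn0 inord_val.
  have := stableP (inord (j - m.+1)) _ (IH (ltnW le_mj)).
  have lt_jn := ltn_ord j.
  rewrite -scalemxAr burauT_subI_delta burauT_superdiag ?inordK; try lia.
  have -> : (inord (j - m.+1) == inord (j - m) :> 'I_n.+1) = false.
    by apply/negbTE; rewrite -val_eqE /= !inordK; lia.
  by rewrite subr0 scale1r.
have up k : (k < n.+1)%N -> P ((c * q ^+ k) *: delta_mx (inord k) 0).
  elim: k => [|k IH] lt_kn.
    by rewrite expr0 mulr1; have := down j (leqnn _); rewrite subnn.
  have := stableP (inord k.+1) _ (IH (ltnW lt_kn)).
  rewrite -scalemxAr burauT_subI_delta burauT_subdiag; last by rewrite !inordK //; lia.
  have -> : (inord k.+1 == inord k :> 'I_n.+1) = false.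
    by apply/negbTE; rewrite -val_eqE /= !inordK //; lia.
  by rewrite subr0 scalerA exprS (mulrC q) mulrA.
by move=> k; have := up k (ltn_ord k); rewrite inord_val.
Qed.

Lemma stable_set_contains_axes (R : comNzRingType) (n : nat) (q : R)
    (P : 'cV[R]_n -> Prop) :
  GRing.lreg (\sum_(i < n.+1) q ^+ i) ->
  (forall (j : 'I_n) v, P v -> P ((burauT q j - 1) *m v)) ->
  forall w, P w -> w != 0 ->
  exists2 c : R, c != 0 & forall k : 'I_n, P ((c * q ^+ k) *: delta_mx k 0).
Proof.
move=> S_reg stableP w Pw w0; have [j c0] := burau_moved_coord S_reg w0.
have Pc := stableP j w Pw; rewrite burauT_subI_col in Pc.
exists (((burauT q j - 1) *m w) j 0) => //.
move: (_ j 0) Pc => c Pc; clear c0 S_reg w Pw w0.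
move: P stableP j Pc; case: n => [|n] P stableP j Pc; first by case: j Pc => [[]].
exact: (@burau_spread R n q P stableP c j Pc).
Qed.

(* A nonzero integer polynomial with a regular root x: after cancelling the
   powers of x, its lowest nonzero coefficient is a multiple of x. *)
Lemma int_root_divides (R : comNzRingType) (x : R) (P : {poly int}) :
  GRing.lreg x -> P != 0 -> (map_poly intr P).[x] = 0 ->
  exists2 N : int, N != 0 & exists r : R, N%:~R = x * r.
Proof.
move=> x_reg; elim/poly_ind: P => [|P c IH]; first by rewrite eqxx.
rewrite rmorphD rmorphM /= map_polyX map_polyC /= hornerD hornerM hornerX hornerC.
have [-> P0 rootPx | c0 _ rootPx] := eqVneq c 0.
  apply: IH; first by apply: contraNneq P0 => ->; rewrite mul0r add0r polyC0 eqxx.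
  by apply: x_reg; rewrite mulr0 mulrC; rewrite mulr0z addr0 in rootPx.
exists c => //; exists (- (map_poly intr P).[x]).
by apply/eqP; rewrite mulrN (mulrC x) -addr_eq0 addrC rootPx.
Qed.

Section CyclotomicEvaluation.
Variables (d : nat) (z : algC).
Hypothesis zP : d.-primitive_root z.

Lemma mk_monic_Phi : mk_monic ('Phi_d : {poly int}) = 'Phi_d.
Proof.
rewrite /mk_monic size_Cyclotomic ltnS totient_gt0 (prim_order_gt0 zP).
by rewrite Cyclotomic_monic.
Qed.

Definition evz (a : Aring d) : algC := (map_poly intr (a : {poly int})).[z].

Lemma evz_in_qpoly (p : {poly int}) :
  evz (in_qpoly ('Phi_d : {poly int}) p) = (map_poly intr p).[z].
Proof.
have Phi_z : (map_poly intr ('Phi_d : {poly int}) : {poly algC}).[z] = 0.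
  by rewrite (Cintr_Cyclotomic zP); apply/rootP; rewrite root_cyclotomic.
rewrite /evz /= {2}(Pdiv.RingMonic.rdivp_eq (monic_mk_monic 'Phi_d) p).
by rewrite rmorphD rmorphM /= hornerD hornerM mk_monic_Phi Phi_z mulr0 add0r.
Qed.

Lemma evz_is_zmod : zmod_morphism evz.
Proof. by move=> a b; rewrite /evz /= !rmorphB /= hornerD hornerN. Qed.

Lemma evz_is_monoid : monoid_morphism evz.
Proof.
split=> [|a b]; first by rewrite /evz /= rmorph1 hornerC.
have -> : a * b = in_qpoly ('Phi_d : {poly int}) ((a : {poly int}) * b) by [].
by rewrite evz_in_qpoly rmorphM hornerM.
Qed.

HB.instance Definition _ := GRing.isZmodMorphism.Build (Aring d) algC evz evz_is_zmod.
HB.instance Definition _ := GRing.isMonoidMorphism.Build (Aring d) algC evz evz_is_monoid.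

Lemma evz_qA : evz (qA d) = z.
Proof. by rewrite /qA evz_in_qpoly map_polyX hornerX. Qed.

(* Injectivity: a representative of degree < deg Phi_d vanishing at z would
   be divisible by the minimal polynomial Phi_d of z. *)
Lemma evz_inj : injective evz.
Proof.
apply: raddf_inj => a evz_a.
have [p [Dp _] rootp] := minCpolyP z.
have int_rat : map_poly (ratr \o intr) (a : {poly int}) = map_poly intr (a : {poly int}) :> {poly algC}.
  by apply: eq_map_poly => x /=; rewrite rmorph_int.
have root_a : root (map_poly ratr (map_poly intr (a : {poly int}))) z.
  by rewrite -map_poly_comp int_rat; exact/eqP.
rewrite rootp in root_a.
have Ep : p = map_poly intr ('Phi_d : {poly int}).
  apply: (@map_inj_poly _ _ (ratr : rat -> algC)); [exact: fmorph_inj | by rewrite rmorph0|].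
  rewrite -Dp (minCpoly_cyclotomic zP) -(Cintr_Cyclotomic zP) -map_poly_comp.
  by apply: eq_map_poly => x /=; rewrite rmorph_int.
have size_intr (r : {poly int}) : size (map_poly intr r : {poly rat}) = size r.
  by apply: size_map_inj_poly; [exact: intr_inj | rewrite rmorph0].
apply: val_inj => /=; apply/eqP; rewrite -size_poly_eq0 -size_intr size_poly_eq0.
have size_a : (size (a : {poly int}) < size ('Phi_d : {poly int}))%N.
  by move: (size_mk_monic a); move: (a : {poly int}) => pa; rewrite mk_monic_Phi.
apply: contraTT size_a => a_nz; rewrite -leqNgt.
by rewrite -(size_intr 'Phi_d) -(size_intr a) -Ep (dvdp_leq a_nz root_a).
Qed.

Lemma evz_lreg (a : Aring d) : a != 0 -> GRing.lreg a.
Proof.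
move=> a0 x y /(congr1 evz); rewrite !rmorphM /=.
have evz_a : evz a != 0 by rewrite -(rmorph0 evz) (inj_eq evz_inj).
by move/(mulfI evz_a)/evz_inj.
Qed.

Lemma evz_qA_neq0 : qA d != 0.
Proof.
apply/eqP => q0; have := prim_expr_order zP.
rewrite -evz_qA q0 rmorph0 expr0n gtn_eqF ?(prim_order_gt0 zP) //= => /eqP.
by rewrite eq_sym oner_eq0.
Qed.

(* Since z is a primitive d-th root and d does not divide n+1,
   1 + z + ... + z^n = (z^(n+1) - 1) / (z - 1) is nonzero. *)
Lemma evz_sum_qA_neq0 (n : nat) :
  ~~ (d %| n.+1)%N -> \sum_(i < n.+1) qA d ^+ i != 0.
Proof.
move=> nd; apply: contraNneq nd => S0.
rewrite (prim_order_dvd zP) -subr_eq0 subrX1.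
have -> : \sum_(i < n.+1) z ^+ i = evz (\sum_(i < n.+1) qA d ^+ i).
  by rewrite rmorph_sum; apply: eq_bigr => i _; rewrite rmorphXn /= evz_qA.
by rewrite S0 rmorph0 mulr0.
Qed.

(* evz lam is an algebraic integer, so its minimal polynomial has integer
   coefficients and vanishes at lam. *)
Lemma evz_divides_int (lam : Aring d) :
  lam != 0 -> exists2 N : int, N != 0 & exists r : Aring d, N%:~R = lam * r.
Proof.
move=> lam0.
have lam_int : evz lam \in Aint.
  apply: rpred_horner; last exact: Aint_prim_root zP.
  by apply/polyOverP => i; rewrite coef_map /=; exact: Aint_int.
have [P EP] := floorpP (lam_int : minCpoly (evz lam) \is a polyOver Num.int).
apply: (int_root_divides (P := P) (evz_lreg lam0)).
  by apply/eqP => P0; have := minCpoly_eq0 (evz lam); rewrite EP P0 rmorph0 eqxx.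
apply: evz_inj; rewrite rmorph0 -horner_map /= -map_poly_comp.
rewrite (eq_map_poly (g := intr)); last by move=> c /=; rewrite rmorph_int.
by rewrite -EP; apply/rootP; exact: root_minCpoly.
Qed.

End CyclotomicEvaluation.

Lemma in_qpoly_val (d : nat) (a : Aring d) :
  in_qpoly ('Phi_d : {poly int}) (a : {poly int}) = a.
Proof. by apply: val_inj; exact: (in_qpoly_small (size_mk_monic a)). Qed.

Lemma in_qpoly_int (d : nat) (c : int) :
  in_qpoly ('Phi_d : {poly int}) c%:P = c%:~R :> Aring d.
Proof.
rewrite -{1}[c]intz polyCMz raddfMz polyC1; congr (_ *~ _); exact: in_qpoly1.
Qed.

Lemma map_burauT (R S : comNzRingType) (f : {rmorphism R -> S}) (n : nat)
    (q : R) (j : 'I_n) :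
  map_mx f (burauT q j) = burauT (f q) j.
Proof.
apply/matrixP => i k; rewrite !mxE.
by repeat case: ifP => _; rewrite ?rmorphN ?rmorph1 ?rmorph0.
Qed.

Lemma rhoT_Gamma (d n : nat) (j : 'I_n) : Gamma (rhoT d j).
Proof. by rewrite -[rhoT d j]mulmx1; apply/GammaT/Gamma1. Qed.

Section StableSubgroup.
Variables (d n : nat) (W : {pred 'cV[Aring d]_n}).
Hypotheses (W0 : 0 \in W) (WB : {in W &, forall x y, x - y \in W}).
Hypothesis stableW : forall g w, Gamma g -> w \in W -> g *m w \in W.

HB.instance Definition _ := GRing.isZmodClosed.Build _ W (conj W0 WB).

Lemma stable_subgroup_subI (j : 'I_n) (v : 'cV[Aring d]_n) :
  v \in W -> (burauT (qA d) j - 1) *m v \in W.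
Proof. by move=> Wv; rewrite mulmxBl mul1mx rpredB // (stableW (rhoT_Gamma d j)). Qed.

(* {a | a e_k \in W} is an ideal of A: it is an additive subgroup stable
   under multiplication by q (as T_k e_k = -q e_k), and q generates A. *)
Lemma stable_subgroup_axis_ideal (k : 'I_n) (a b : Aring d) :
  a *: delta_mx k 0 \in W -> (b * a) *: delta_mx k 0 \in W.
Proof.
have mulq a' : a' *: delta_mx k 0 \in W -> (qA d * a') *: delta_mx k 0 \in W.
  move=> Wa; have := stableW (rhoT_Gamma d k) Wa.
  by rewrite -scalemxAr burauT_delta_self scalerA mulrN scaleNr rpredN mulrC.
rewrite -[b]in_qpoly_val; elim/poly_ind: (b : {poly int}) a.
  by move=> a _; rewrite rmorph0 mul0r scale0r rpred0.
move=> p c IH a Wa; rewrite rmorphD rmorphM /= -[in_qpoly _ 'X]/(qA d).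
rewrite mulrDl scalerDl rpredD //; first by rewrite -mulrA IH // mulq.
by rewrite in_qpoly_int mulrzl -scalerMzl rpredMz.
Qed.
Lemma stable_subgroup_multiple (w : 'cV[Aring d]_n) :
  (0 < d)%N -> ~~ (d %| n.+1)%N -> w \in W -> w != 0 ->
  exists2 lam : Aring d, lam != 0 & forall v : 'cV[Aring d]_n, lam *: v \in W.
Proof.
move=> d_gt0 nd Ww w0; have [z zP] := C_prim_root_exists d_gt0.
have S_reg := evz_lreg zP (evz_sum_qA_neq0 zP nd).
have [c c0 Wc] := stable_set_contains_axes S_reg stable_subgroup_subI Ww w0.
exists (c * qA d ^+ n).
  rewrite (mulrI_eq0 _ (evz_lreg zP c0)).
  exact/lreg_neq0/lregX/(evz_lreg zP)/(evz_qA_neq0 zP).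
move=> v; rewrite (matrix_sum_delta v) scaler_sumr rpred_sum // => i _.
rewrite scaler_sumr rpred_sum // => l _; rewrite (ord1 l) scalerA.
have qn : qA d ^+ n = qA d ^+ (n - i) * qA d ^+ i by rewrite -exprD subnK // ltnW.
have -> : c * qA d ^+ n * v i 0 = (v i 0 * qA d ^+ (n - i)) * (c * qA d ^+ i).
  by rewrite qn; ring.
exact: stable_subgroup_axis_ideal.
Qed.

End StableSubgroup.

Lemma residue_lt (N x : int) : N != 0 -> (`|(x %% N)%Z| < `|N|)%N.
Proof.
move=> N0; have := ltz_mod x N0; have := modz_ge0 x N0.
by rewrite -ltz_nat; lia.
Qed.

(* A / N A is finite for every nonzero integer N: reduce the coefficients of
   the canonical representative modulo N. *)
Lemma Aring_mod_int (d : nat) (N : int) : N != 0 ->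
  exists s : seq (Aring d),
    forall a, exists2 r, r \in s & exists b, a - r = N%:~R * b.
Proof.
move=> N0; pose m := size (mk_monic ('Phi_d : {poly int})).
pose digits (t : {ffun 'I_m -> 'I_`|N|}) : Aring d := in_qpoly 'Phi_d
  (\poly_(i < m) oapp (fun i' => (t i' : nat)%:Z) 0 (insub i)).
exists (codom digits) => a; pose ca i := (a : {poly int})`_i.
exists (digits [ffun i : 'I_m => Ordinal (residue_lt (ca i) N0)]); first exact: codom_f.
exists (in_qpoly 'Phi_d (\poly_(i < m) (ca i %/ N)%Z)).
rewrite -{1}[a]in_qpoly_val -in_qpoly_int -rmorphB -rmorphM; congr (in_qpoly _ _).
apply/polyP => i; rewrite coefB coefCM !coef_poly.
case: ifP => lt_im.
  rewrite (insubT (fun i => i < m)%N lt_im) /= ffunE /= gez0_abs ?modz_ge0 //.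
  by rewrite -/(ca i) {1}(divz_eq (ca i) N) addrK mulrC.
rewrite mulr0 subr0 nth_default // leqNgt; apply: contraFN lt_im => lt_ia.
exact: ltn_trans lt_ia (size_mk_monic a).
Qed.

Lemma colmx_mod_reps (R : pzRingType) (c : R) (n : nat) :
  (exists s : seq R, forall a, exists2 r, r \in s & exists b, a - r = c * b) ->
  exists s' : seq 'cV[R]_n,
    forall v, exists2 r, r \in s' & exists u, v - r = c *: u.
Proof.
move=> [s reps]; pose col_of (t : {ffun 'I_n -> 'I_(size s)}) := \col_k s`_(t k).
exists (codom col_of) => v.
have rep_entry k : exists p : 'I_(size s) * R, v k 0 - s`_p.1 = c * p.2.
  have [r r_s [b vb]] := reps (v k 0).
  have ir : (index r s < size s)%N by rewrite index_mem.
  by exists (Ordinal ir, b); rewrite /= nth_index.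
have [p Ep] := fin_all_exists rep_entry.
exists (col_of [ffun k => (p k).1]); first exact: codom_f.
exists (\col_k (p k).2); apply/matrixP => k l; rewrite (ord1 l) !mxE ffunE.
exact: Ep.
Qed.

(* Part (b): a nonzero F-subspace stable under the image of the braid group
   contains every e_k = (c q^k)^-1 (c q^k e_k), hence is everything. *)
Lemma stable_subspace_full (d n : nat) (F : fieldType)
    (f : {rmorphism Aring d -> F}) (WF : {vspace 'cV[F]_n}) :
  (0 < d)%N -> ~~ (d %| n.+1)%N -> injective f -> WF != 0%VS ->
  (forall g w, Gamma g -> w \in WF -> map_mx f g *m w \in WF) ->
  WF = fullv.
Proof.
move=> d_gt0 nd f_inj WF0 stableWF; have [z zP] := C_prim_root_exists d_gt0.
have f_neq0 a : a != 0 -> f a != 0 by rewrite -(rmorph0 f) (inj_eq f_inj).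
have stable_subI j v : v \in WF -> (burauT (f (qA d)) j - 1) *m v \in WF.
  move=> WFv; rewrite mulmxBl mul1mx memvB // -map_burauT.
  exact: stableWF (rhoT_Gamma d j) WFv.
have S_reg : GRing.lreg (\sum_(i < n.+1) f (qA d) ^+ i).
  apply/lregP; have := f_neq0 _ (evz_sum_qA_neq0 zP nd).
  by rewrite rmorph_sum; under eq_bigr do rewrite rmorphXn.
have w0 : vpick WF != 0 by rewrite vpick0.
have [c c0 WFc] := stable_set_contains_axes S_reg stable_subI (memv_pick WF) w0.
have q0 := f_neq0 _ (evz_qA_neq0 zP).
apply/vspaceP => v; rewrite memvf (matrix_sum_delta v).
apply: memv_suml => i _; apply: memv_suml => l _; rewrite (ord1 l).
have := memvZ (v i 0 / (c * f (qA d) ^+ i)) (WFc i).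
by rewrite scalerA divfK // mulf_neq0 // expf_neq0.
Qed.

Unset Implicit Arguments.

Theorem lemma4p3 (d n : nat) :
  (3 <= d)%N -> ~~ (d %| n.+1)%N ->
  (* (a) *)
  (forall W : {pred 'cV[Aring d]_n},
      0 \in W -> (forall x y, x \in W -> y \in W -> x - y \in W) ->
      (exists2 w, w \in W & w != 0) ->
      (forall g w, @Gamma d n g -> w \in W -> g *m w \in W) ->
      (exists2 lam : Aring d, lam != 0 & forall v : 'cV[Aring d]_n, lam *: v \in W)
      /\ (exists s : seq 'cV[Aring d]_n,
            forall v : 'cV[Aring d]_n, exists2 r, r \in s & v - r \in W))
  /\
  (* (b) *)
  (forall (F : fieldType) (f : {rmorphism Aring d -> F}), injective f ->
    forall WF : {vspace 'cV[F]_n}, WF != 0%VS ->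
      (forall g w, @Gamma d n g -> w \in WF -> map_mx f g *m w \in WF) ->
      WF = fullv).
Proof.
move=> d3 nd; have d_gt0 : (0 < d)%N by apply: leq_trans d3.
split=> [W W0 WB [w Ww w0] stableW | F f f_inj WF WF0 stableWF].
  have [lam lam0 lamW] := stable_subgroup_multiple W0 WB stableW d_gt0 nd Ww w0.
  split; first by exists lam.
  have [z zP] := C_prim_root_exists d_gt0.
  have [N N0 [r Nr]] := evz_divides_int zP lam0.
  have [s reps] := colmx_mod_reps n (Aring_mod_int d N0).
  exists s => v; have [r' r's [u vu]] := reps v.
  by exists r' => //; rewrite vu Nr -scalerA lamW.
exact: stable_subspace_full d_gt0 nd f_inj WF0 stableWF.
Qed.
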